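(* Let $q$ be a power of the prime $p$ and $n$ a positive integer. Let $h\in\mathbb{F}_q[x]$ with $\gcd\left(h(x),\frac{x^n-1}{x-1}\right)=1$, and let $m$ be a positive integer with $m<q-1$ and $\gcd(m,q-1)=1$. Then: (i) if $m=1$, then for every $\alpha,\theta_0,\ldots,\theta_{q-1}\in\mathbb{F}_{q^n}$ with $\mathrm{Tr}_{q^n/q}(\alpha)\neq -h(1)$, the polynomial $$P(x)=L_h(x)+\alpha\cdot\mathrm{Tr}_{q^n/q}(x)+\sum_{i=0}^{q-1}(\theta_i^q-\theta_i)\cdot\mathrm{Tr}_{q^n/q}(x)^i$$ is a permutation polynomial of $\mathbb{F}_{q^n}$; in particular, if $p\nmid n$, one may take $\alpha$ to be any element of $\mathbb{F}_q\setminus\{-\frac{h(1)}{n}\}$; (ii) if $m>1$, then for every $\alpha,\beta,\theta_0,\ldots,\theta_{q-1}\in\mathbb{F}_{q^n}$ with $\mathrm{Tr}_{q^n/q}(\alpha)=-h(1)$ and $\mathrm{Tr}_{q^n/q}(\beta)\neq 0$, the polynomial $$P(x)=L_h(x)+\alpha\cdot\mathrm{Tr}_{q^n/q}(x)+\beta\cdot\mathrm{Tr}_{q^n/q}(x)^m+\sum_{i=0}^{q-1}(\theta_i^q-\theta_i)\cdot\mathrm{Tr}_{q^n/q}(x)^i$$ is a permutation polynomial of $\mathbb{F}_{q^n}$; in particular, if $p\nmid n$, one may take $\alpha=-\frac{h(1)}{n}$ and $\beta$ any nonzero element of $\mathbb{F}_q$.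
   Context: For $u(x)=\sum_{i=0}^m a_i x^i\in\mathbb{F}_q[x]$, its linearized $q$-associate is $L_u(x)=\sum_{i=0}^m a_i x^{q^i}$. $\mathrm{Tr}_{q^n/q}(x)=x+x^q+\cdots+x^{q^{n-1}}$. A permutation polynomial of a finite field is a polynomial inducing a bijection of it. *)

From HB Require Import structures.
From mathcomp Require Import all_boot all_order all_algebra all_field.
Set Implicit Arguments. Unset Strict Implicit. Unset Printing Implicit Defensive.
Import GRing.Theory.
Local Open Scope ring_scope.

(* Setting: L is the finite field F_{q^n}; F_q is its subfield {x | x^q = x}. *)

Definition inFq (L : finFieldType) (q : nat) (x : L) : bool := x ^+ q == x.

Definition polyFq (L : finFieldType) (q : nat) (h : {poly L}) : Prop :=
  forall i : nat, inFq q h`_i.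

Definition linq (L : finFieldType) (q : nat) (h : {poly L}) (x : L) : L :=
  \sum_(i < size h) h`_i * x ^+ (q ^ i).

Definition trq (L : finFieldType) (q n : nat) (x : L) : L :=
  \sum_(i < n) x ^+ (q ^ i).

Definition is_perm_fun (L : finFieldType) (f : L -> L) : Prop := bijective f.

From HB Require Import structures.
From mathcomp Require Import all_boot all_order all_algebra all_field.
Import GRing.Theory.
Local Open Scope ring_scope.
Set Implicit Arguments. Unset Strict Implicit.

(* Write P(x) = L_h(x) + F(Tr x). Since Tr(L_h(x)) = h(1) Tr(x) and
   Tr(theta^q - theta) = 0, the trace of P(x) is g(Tr x) for a map g of F_q
   which is injective under either hypothesis: g(t) = (h(1) + Tr alpha) t, or
   g(t) = Tr(beta) t^m with m prime to q - 1. Hence P(x) = P(y) forces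
   Tr(x - y) = 0 and L_h(x - y) = 0. Through f |-> L_f(z), the ring F_q[x] acts
   on F_{q^n} with x acting as the Frobenius; the annihilator of z contains h
   and (x^n - 1)/(x - 1), whose q-associate is the trace. These are coprime, so
   by Bezout z = 0. *)

Section PcharPower.

Variables (R : comNzRingType) (N : nat).
Hypothesis Nchar : [pchar R].-nat N.

Lemma expr_pchar_is_zmod_morphism : zmod_morphism (fun x : R => x ^+ N).
Proof. by move=> x y; rewrite exprDn_pchar // exprNn_pchar. Qed.

Lemma expr_pchar_sum I (r : seq I) (P : pred I) (F : I -> R) :
  (\sum_(i <- r | P i) F i) ^+ N = \sum_(i <- r | P i) F i ^+ N.
Proof.
apply: (big_morph (fun x : R => x ^+ N)); first by move=> x y; rewrite exprDn_pchar.
by rewrite expr0n; case: N Nchar.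
Qed.

End PcharPower.

Section LinearizedPolynomials.

Variables (L : finFieldType) (q : nat).
Hypothesis qchar : [pchar L].-nat q.

Lemma q_gt0 : (0 < q)%N.
Proof. by case/andP: qchar. Qed.

Lemma pchar_nat_expn j : [pchar L].-nat (q ^ j)%N.
Proof. by rewrite pnatX qchar. Qed.

Lemma inFq_exprqn (x : L) j : inFq q x -> x ^+ (q ^ j) = x.
Proof.
move/eqP=> xq; elim: j => [|j IHj]; first by rewrite expr1.
by rewrite expnSr exprM IHj xq.
Qed.

Lemma inFqD (x y : L) : inFq q x -> inFq q y -> inFq q (x + y).
Proof. by move=> /eqP xq /eqP yq; rewrite /inFq exprDn_pchar // xq yq. Qed.

Lemma inFqN (x : L) : inFq q x -> inFq q (- x).
Proof. by move=> /eqP xq; rewrite /inFq exprNn_pchar // xq. Qed.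

Lemma inFqM (x y : L) : inFq q x -> inFq q y -> inFq q (x * y).
Proof. by move=> /eqP xq /eqP yq; rewrite /inFq exprMn xq yq. Qed.

Lemma inFqV (x : L) : inFq q x -> inFq q x^-1.
Proof. by move=> /eqP xq; rewrite /inFq exprVn xq. Qed.

Lemma inFqX (x : L) i : inFq q x -> inFq q (x ^+ i).
Proof. by move=> /eqP xq; rewrite /inFq exprAC xq. Qed.

Lemma inFq_nat j : inFq q (j%:R : L).
Proof.
elim: j => [|j IHj]; first by rewrite /inFq expr0n gtn_eqF ?q_gt0.
by rewrite -addn1 natrD inFqD // /inFq expr1n.
Qed.

Lemma inFq_horner1 (h : {poly L}) : polyFq q h -> inFq q h.[1].
Proof.
move=> hFq; rewrite horner_coef /inFq expr_pchar_sum //.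
by apply/eqP; apply: eq_bigr => i _; rewrite expr1n mulr1 (eqP (hFq i)).
Qed.

Lemma inFq_expr_period (s : L) j : inFq q s -> s ^+ (j * (q - 1)).+1 = s.
Proof.
move/eqP=> sq; elim: j => [|j IHj]; first by rewrite expr1.
by rewrite mulSn -addnS exprD IHj -exprSr subn1 prednK ?q_gt0.
Qed.

Lemma inFq_expr_inj m : (0 < m)%N -> coprime m (q - 1) ->
  {in inFq q &, injective (fun t : L => t ^+ m)}.
Proof.
move=> m_gt0 mq_coprime s t sFq tFq /= st_m.
have [a b ab_eq _] := egcdnP (q - 1) m_gt0.
rewrite (eqP mq_coprime) addn1 in ab_eq.
by rewrite -(inFq_expr_period b sFq) -(inFq_expr_period b tFq) -ab_eq mulnC !exprM st_m.
Qed.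

Lemma polyFqXM (g : {poly L}) : polyFq q g -> polyFq q ('X * g).
Proof.
move=> gFq i; rewrite coefXM; case: eqP => // _.
by rewrite /inFq expr0n gtn_eqF ?q_gt0.
Qed.

Lemma polyFq_geom n : polyFq q (\poly_(i < n) (1 : L)).
Proof.
move=> i; rewrite coef_poly /inFq.
by case: ltnP => _; rewrite ?expr1n // expr0n gtn_eqF ?q_gt0.
Qed.

Lemma linq_is_zmod_morphism (h : {poly L}) : zmod_morphism (linq q h).
Proof.
move=> x y; rewrite /linq -sumrB; apply: eq_bigr => i _.
by rewrite expr_pchar_is_zmod_morphism ?pchar_nat_expn // mulrBr.
Qed.

HB.instance Definition _ (h : {poly L}) :=
  GRing.isZmodMorphism.Build L L (linq q h) (linq_is_zmod_morphism h).

Lemma linq_widen N (f : {poly L}) z :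
  (size f <= N)%N -> linq q f z = \sum_(i < N) f`_i * z ^+ (q ^ i).
Proof.
move=> sfN; rewrite /linq (big_ord_widen _ (fun i => f`_i * z ^+ (q ^ i)) sfN).
rewrite big_mkcond /=; apply: eq_bigr => i _.
by case: ltnP => // fi; rewrite nth_default ?mul0r.
Qed.

Lemma linqD (f g : {poly L}) z : linq q (f + g) z = linq q f z + linq q g z.
Proof.
pose N := maxn (size f) (size g).
rewrite (@linq_widen N) ?(leq_trans (size_polyD _ _)) //.
rewrite (@linq_widen N f) ?leq_maxl // (@linq_widen N g) ?leq_maxr //.
by rewrite -big_split; apply: eq_bigr => i _; rewrite coefD mulrDl.
Qed.

Lemma linqCM c (g : {poly L}) z : linq q (c%:P * g) z = c * linq q g z.
Proof.
rewrite (@linq_widen (size g)) ?mul_polyC ?size_scale_leq //.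
by rewrite mulr_sumr; apply: eq_bigr => i _; rewrite coefZ mulrA.
Qed.

Lemma linqC (c z : L) : linq q c%:P z = c * z.
Proof. by rewrite -[c%:P]mulr1 linqCM /linq size_poly1 big_ord1 coefC mul1r. Qed.

Lemma linqXM (g : {poly L}) z :
  polyFq q g -> linq q ('X * g) z = linq q g z ^+ q.
Proof.
move=> gFq; rewrite (@linq_widen (size g).+1); last first.
  by rewrite (leq_trans (size_polyMleq _ _)) // size_polyX.
rewrite big_ord_recl coefXM eqxx mul0r add0r /linq expr_pchar_sum //.
apply: eq_bigr => i _; rewrite coefXM /= exprMn (eqP (gFq i)).
by rewrite -exprM -expnSr.
Qed.

Lemma linqM_eq0 (u g : {poly L}) z :
  polyFq q g -> linq q g z = 0 -> linq q (u * g) z = 0.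
Proof.
elim/poly_ind: u g => [|u c IHu] g gFq gz0; first by rewrite mul0r linqC mul0r.
rewrite mulrDl -mulrA linqD linqCM gz0 mulr0 addr0 IHu //; first exact: polyFqXM.
by rewrite linqXM // gz0 expr0n gtn_eqF ?q_gt0.
Qed.

Lemma linq_coprime_eq0 (g h : {poly L}) z :
  polyFq q g -> polyFq q h -> coprimep h g ->
  linq q h z = 0 -> linq q g z = 0 -> z = 0.
Proof.
move=> gFq hFq /Bezout_coprimepP[[u v] /= Bezout_uv] hz0 gz0.
have /size_poly1P[c c_neq0 uvE] : size (u * h + v * g) == 1%N.
  by rewrite (eqp_size Bezout_uv) size_poly1.
have : linq q (u * h + v * g) z = 0 by rewrite linqD !linqM_eq0 ?addr0.
by rewrite uvE linqC => /eqP; rewrite mulf_eq0 (negPf c_neq0) => /eqP.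
Qed.

Variable n : nat.

Lemma trq_is_zmod_morphism : zmod_morphism (trq (L := L) q n).
Proof.
move=> x y; rewrite /trq -sumrB; apply: eq_bigr => i _.
by rewrite expr_pchar_is_zmod_morphism ?pchar_nat_expn.
Qed.

HB.instance Definition _ :=
  GRing.isZmodMorphism.Build L L (trq q n) trq_is_zmod_morphism.

Lemma geom_polyE : ('X^n - 1) %/ ('X - 1) = \poly_(i < n) (1 : L).
Proof.
have X_sub1_neq0 : 'X - 1 != 0 :> {poly L} by rewrite -polyC1 polyXsubC_eq0.
by rewrite subrX1 mulKp // poly_def; apply: eq_bigr => i _; rewrite scale1r.
Qed.

Lemma linq_geom (z : L) : linq q (\poly_(i < n) 1) z = trq q n z.
Proof.
rewrite (@linq_widen n) ?size_poly //.
by apply: eq_bigr => i _; rewrite coef_poly ltn_ord mul1r.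
Qed.

Lemma trq_inFq (x : L) : inFq q x -> trq q n x = n%:R * x.
Proof.
move=> xFq; rewrite /trq (eq_bigr (fun=> x)) => [|i _]; last exact: inFq_exprqn.
by rewrite sumr_const card_ord mulr_natl.
Qed.

Lemma trq_mull c (x : L) : inFq q c -> trq q n (c * x) = c * trq q n x.
Proof.
move=> cFq; rewrite /trq mulr_sumr; apply: eq_bigr => i _.
by rewrite exprMn (inFq_exprqn _ cFq).
Qed.

Lemma trq_mulr (c x : L) : inFq q x -> trq q n (c * x) = trq q n c * x.
Proof.
move=> xFq; rewrite /trq mulr_suml; apply: eq_bigr => i _.
by rewrite exprMn (inFq_exprqn _ xFq).
Qed.

Hypotheses (cardL : #|L| = (q ^ n)%N) (n_gt0 : (0 < n)%N).

Lemma inFq_trq (x : L) : inFq q (trq q n x).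
Proof.
apply/eqP; rewrite /trq expr_pchar_sum //.
under eq_bigr do rewrite -exprM -expnSr.
case: n cardL n_gt0 => // n' cardL' _.
rewrite big_ord_recr big_ord_recl /= -cardL' expf_card addrC.
by congr (_ + _); apply: eq_bigr.
Qed.

Lemma trq_exprqn (x : L) j : trq q n (x ^+ (q ^ j)) = trq q n x.
Proof.
rewrite -[RHS](inFq_exprqn j (inFq_trq x)) /trq expr_pchar_sum ?pchar_nat_expn //.
by apply: eq_bigr => i _; rewrite exprAC.
Qed.

Lemma trq_linq (h : {poly L}) (x : L) :
  polyFq q h -> trq q n (linq q h x) = h.[1] * trq q n x.
Proof.
move=> hFq; rewrite /linq raddf_sum /= horner_coef mulr_suml.
by apply: eq_bigr => i _; rewrite trq_mull // trq_exprqn expr1n mulr1.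
Qed.

Lemma trq_sum_exprqB_eq0 (theta : 'I_q -> L) t : inFq q t ->
  trq q n (\sum_(i < q) (theta i ^+ q - theta i) * t ^+ i) = 0.
Proof.
move=> tFq; rewrite raddf_sum /= big1 // => i _.
by rewrite trq_mulr ?inFqX // raddfB /= -(trq_exprqn (theta i) 1) expn1 subrr mul0r.
Qed.

Variable h : {poly L}.
Hypotheses (hFq : polyFq q h) (h_coprime : coprimep h (('X^n - 1) %/ ('X - 1))).

Lemma trq_linq_eq0 z : trq q n z = 0 -> linq q h z = 0 -> z = 0.
Proof.
move: h_coprime; rewrite geom_polyE => hPhi tz0 hz0.
by apply: (linq_coprime_eq0 (polyFq_geom n) hFq hPhi hz0); rewrite linq_geom.
Qed.

Lemma linq_trq_bij (F : L -> L) :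
  {in inFq q &, injective (fun t => h.[1] * t + trq q n (F t))} ->
  is_perm_fun (fun x => linq q h x + F (trq q n x)).
Proof.
move=> g_inj; apply: injF_bij => x y /= Pxy.
have trq_xy : trq q n x = trq q n y.
  apply: g_inj => /=; try exact: inFq_trq.
  by rewrite -!trq_linq // -!raddfD /= Pxy.
move: Pxy; rewrite trq_xy => /addIr/eqP; rewrite -subr_eq0 -raddfB => /eqP hxy.
apply/eqP; rewrite -subr_eq0; apply/eqP/trq_linq_eq0 => //.
by rewrite raddfB /= trq_xy subrr.
Qed.

Lemma linq_trq_linear_perm (alpha : L) (theta : 'I_q -> L) :
  trq q n alpha != - h.[1] ->
  is_perm_fun (fun x => linq q h x + alpha * trq q n x
    + \sum_(i < q) (theta i ^+ q - theta i) * trq q n x ^+ i).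
Proof.
move=> alpha_ok.
pose F t := alpha * t + \sum_(i < q) (theta i ^+ q - theta i) * t ^+ i.
apply: (@eq_bij _ _ (fun x => linq q h x + F (trq q n x))) => [|x]; last first.
  by rewrite /F addrA.
apply: linq_trq_bij => s t sFq tFq /=.
rewrite /F !raddfD /= !trq_mulr ?trq_sum_exprqB_eq0 // !addr0 -!mulrDl.
by apply: mulfI; rewrite addrC addr_eq0.
Qed.

Lemma linq_trq_power_perm m (alpha beta : L) (theta : 'I_q -> L) :
  (0 < m)%N -> coprime m (q - 1) ->
  trq q n alpha = - h.[1] -> trq q n beta != 0 ->
  is_perm_fun (fun x => linq q h x + alpha * trq q n x + beta * trq q n x ^+ m
    + \sum_(i < q) (theta i ^+ q - theta i) * trq q n x ^+ i).
Proof.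
move=> m_gt0 mq_coprime alpha_tr beta_ok.
pose F t := alpha * t + beta * t ^+ m
  + \sum_(i < q) (theta i ^+ q - theta i) * t ^+ i.
apply: (@eq_bij _ _ (fun x => linq q h x + F (trq q n x))) => [|x]; last first.
  by rewrite /F !addrA.
apply: linq_trq_bij => s t sFq tFq /=.
rewrite /F !raddfD /= !trq_mulr ?inFqX ?trq_sum_exprqB_eq0 // !addr0 !addrA.
rewrite -!mulrDl alpha_tr addrN !mul0r !add0r => /(mulfI beta_ok).
exact: inFq_expr_inj.
Qed.

End LinearizedPolynomials.

Unset Implicit Arguments.

Theorem corollary3p8 (L : finFieldType) (p k q n : nat)
  (hp : prime p) (hk : (0 < k)%N) (hq : q = (p ^ k)%N) (hn : (0 < n)%N)
  (hL : #|L| = (q ^ n)%N)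
  (h : {poly L}) (hFq : polyFq q h)
  (hgcd : coprimep h (('X^n - 1) %/ ('X - 1)))
  (m : nat) (hm0 : (0 < m)%N) (hmq : (m < q - 1)%N) (hcop : coprime m (q - 1)) :
  (m = 1%N ->
     (forall (alpha : L) (theta : 'I_q -> L),
        trq q n alpha != - h.[1] ->
        is_perm_fun (fun x : L => linq q h x + alpha * trq q n x
           + \sum_(i < q) (theta i ^+ q - theta i) * trq q n x ^+ i))
     /\
     (~~ (p %| n)%N ->
      forall (alpha : L) (theta : 'I_q -> L),
        inFq q alpha -> alpha != - h.[1] / n%:R ->
        is_perm_fun (fun x : L => linq q h x + alpha * trq q n x
           + \sum_(i < q) (theta i ^+ q - theta i) * trq q n x ^+ i)))
  /\
  ((1 < m)%N ->
     (forall (alpha beta : L) (theta : 'I_q -> L),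
        trq q n alpha = - h.[1] -> trq q n beta != 0 ->
        is_perm_fun (fun x : L => linq q h x + alpha * trq q n x
           + beta * trq q n x ^+ m
           + \sum_(i < q) (theta i ^+ q - theta i) * trq q n x ^+ i))
     /\
     (~~ (p %| n)%N ->
      forall (beta : L) (theta : 'I_q -> L),
        inFq q beta -> beta != 0 ->
        is_perm_fun (fun x : L => linq q h x + (- h.[1] / n%:R) * trq q n x
           + beta * trq q n x ^+ m
           + \sum_(i < q) (theta i ^+ q - theta i) * trq q n x ^+ i))).
Proof.
have pchar_p : p \in [pchar L].
  by apply: (@card_finPcharP L p (k * n)) => //; rewrite hL hq expnM.
have qchar : [pchar L].-nat q.
  by rewrite hq pnatX (eq_pnat _ (pcharf_eq pchar_p)) pnat_id.
have n_neq0 : ~~ (p %| n)%N -> (n%:R : L) != 0 by rewrite (dvdn_pcharf pchar_p).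
have c_Fq : inFq q (- h.[1] / n%:R).
  by rewrite inFqM ?inFqN ?inFqV ?inFq_nat ?inFq_horner1.
have linear_perm := linq_trq_linear_perm qchar hL hn hFq hgcd.
have power_perm := linq_trq_power_perm qchar hL hn hFq hgcd.
split=> [_ | _]; split=> [|p_ndvd_n] //.
- move=> alpha theta alpha_Fq alpha_neq; apply: linear_perm.
  rewrite trq_inFq //; apply: contra alpha_neq => /eqP <-.
  by rewrite mulrAC divff ?mul1r ?n_neq0.
- by move=> alpha beta theta; apply: power_perm.
- move=> beta theta beta_Fq beta_neq0; apply: power_perm => //.
    by rewrite trq_inFq // mulrC divfK ?n_neq0.
  by rewrite trq_inFq // mulf_neq0 ?n_neq0.
Qed.
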